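(* Let $k\ge1$ be an integer and $a,b,c,d\ge0$. Let $S_1=\inf\{S(u,v):(u,v)\in H^1(\mathbb{R})\times H^1(\mathbb{R}),\ \widetilde P(u,v)=1\}$ and $\lambda_1=(S_1)^{\frac{k+1}{k}}$. Then $$\lambda_1=\frac{2k+2}{k}\,\omega_{\mathcal{N}},$$ where $\omega_{\mathcal{N}}=\inf_{(u,v)\in\mathcal{N}}I(u,v)$.
   Context: $H(u,v)=\frac{a}{2k+2}(u^{2k+2}+v^{2k+2})+\frac{b}{k+1}(uv)^{k+1}+\frac{c}{k}u^{k+2}v^k+\frac{d}{k}u^kv^{k+2}$; $S(u,v)=\int(u'^2+v'^2+u^2+v^2)dx$; $\widetilde P(u,v)=(2k+2)\int H(u,v)dx$; $I(u,v)=\frac12S(u,v)-\int H(u,v)dx$; $\mathcal{N}=\{(u,v)\in H^1\times H^1\setminus\{(0,0)\}:I'(u,v)(u,v)=0\}$. *)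

From HB Require Import structures.
From mathcomp Require Import all_boot all_order all_algebra.
From mathcomp Require Import all_classical all_reals all_analysis.
Set Implicit Arguments. Unset Strict Implicit. Unset Printing Implicit Defensive.
Import Order.TTheory GRing.Theory Num.Theory.
Import numFieldNormedType.Exports.
Local Open Scope classical_set_scope.
Local Open Scope ring_scope.

Section Defs.
Variable R : realType.
Local Notation mu := (@lebesgue_measure R).

Definition Rint (f : R -> R) : R := Rintegral mu setT f.

Definition L2 (f : R -> R) : Prop :=
  measurable_fun setT f /\ mu.-integrable setT (fun x => (f x ^+ 2)%:E).

Definition test_fun (phi : R -> R) : Prop :=
  (forall (n : nat) (x : R), derivable (derive1n n phi) x 1) /\
  (exists M : R, forall x, M < `|x| -> phi x = 0).

Definition weak_deriv (u g : R -> R) : Prop :=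
  forall phi, test_fun phi ->
    Rint (fun x => u x * derive1 phi x) = - Rint (fun x => g x * phi x).

Definition H1 (u du : R -> R) : Prop := L2 u /\ L2 du /\ weak_deriv u du.

Definition Hnl (k : nat) (a b c d : R) (u v : R) : R :=
  a / (2 * k.+1)%:R * (u ^+ (2 * k.+1) + v ^+ (2 * k.+1))
  + b / k.+1%:R * (u * v) ^+ k.+1
  + c / k%:R * (u ^+ k.+2 * v ^+ k)
  + d / k%:R * (u ^+ k * v ^+ k.+2).

Definition Sfun (u du v dv : R -> R) : R :=
  Rint (fun x => du x ^+ 2 + dv x ^+ 2 + u x ^+ 2 + v x ^+ 2).

Definition Ptil (k : nat) (a b c d : R) (u v : R -> R) : R :=
  (2 * k.+1)%:R * Rint (fun x => Hnl k a b c d (u x) (v x)).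

Definition Ifun (k : nat) (a b c d : R) (u du v dv : R -> R) : R :=
  Sfun u du v dv / 2 - Rint (fun x => Hnl k a b c d (u x) (v x)).

(* t |-> I((u,v) + t (u,v)); its derivative at 0 is I'(u,v)(u,v) *)
Definition Iray (k : nat) (a b c d : R) (u du v dv : R -> R) (t : R) : R :=
  Ifun k a b c d (fun x => u x + t * u x) (fun x => du x + t * du x)
                 (fun x => v x + t * v x) (fun x => dv x + t * dv x).

Definition Nehari (k : nat) (a b c d : R) (u du v dv : R -> R) : Prop :=
  H1 u du /\ H1 v dv /\
  ~ (\forall x \ae mu, u x = 0 /\ v x = 0) /\
  derivable (Iray k a b c d u du v dv) 0 1 /\
  derive1 (Iray k a b c d u du v dv) 0 = 0.

Definition S1 (k : nat) (a b c d : R) : R :=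
  inf [set s | exists u du v dv, H1 u du /\ H1 v dv /\
         Ptil k a b c d u v = 1 /\ s = Sfun u du v dv].

Definition omegaN (k : nat) (a b c d : R) : R :=
  inf [set s | exists u du v dv, Nehari k a b c d u du v dv /\
         s = Ifun k a b c d u du v dv].

Definition lambda1 (k : nat) (a b c d : R) : R :=
  S1 k a b c d `^ (k.+1%:R / k%:R).
End Defs.

(* Along the ray t(u,v), S scales like t^2 and P~ like t^(2k+2), so the Nehari
   condition I'(u,v)(u,v) = 0 reads S(u,v) = P~(u,v), and then
   I(u,v) = k/(2k+2) S(u,v).  Rescaling a pair of N onto {P~ = 1}, and a pair of
   {P~ = 1} onto N, shows that the values of I on N are exactly the images of
   the values of S on {P~ = 1} under x |-> k/(2k+2) x^((k+1)/k).  This map is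
   an increasing bijection of [0, +oo) fixing 0, so it commutes with inf. *)

From Pilot Require Import Defs.
From mathcomp Require Import all_boot all_order all_algebra.
From mathcomp Require Import all_classical all_reals all_analysis.
From mathcomp Require Import measurable_realfun.
From mathcomp Require Import ring.
Set Implicit Arguments. Unset Strict Implicit. Unset Printing Implicit Defensive.
Import Order.TTheory GRing.Theory Num.Theory.
Local Open Scope classical_set_scope.
Local Open Scope ring_scope.

Section Rintegral_extra.
Context d (T : measurableType d) (R : realType) (mu : {measure set T -> \bar R}).
Variable D : set T.
Hypothesis mD : measurable D.

(* [Rintegral] is [fine] of the extended integral, and [fine] maps infinite values to [0]. *)
Lemma Rintegral_nonintegrable (f : T -> R) : measurable_fun D f ->
  ~ mu.-integrable D (EFin \o f) -> Rintegral mu D f = 0.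
Proof.
move=> mf nint; rewrite /Rintegral integralE.
have mF : measurable_fun D (EFin \o f) by exact/measurable_EFinP.
have abs_oo : (\int[mu]_(x in D) (abse \o (EFin \o f)) x = +oo)%E.
  apply/eqP; rewrite eq_le leey /= leNgt; apply/negP => fin; apply: nint.
  exact/integrableP.
rewrite fune_abse ge0_integralD // in abs_oo; last 2 first.
- exact: measurable_funepos.
- exact: measurable_funeneg.
have : (0 <= \int[mu]_(x in D) (EFin \o f)^\- x)%E.
  by apply: integral_ge0 => x _; exact: funeneg_ge0.
have : (0 <= \int[mu]_(x in D) (EFin \o f)^\+ x)%E.
  by apply: integral_ge0 => x _; exact: funepos_ge0.
move: abs_oo.
by move: (\int[mu]_(x in _) _ ^\+ x)%E (\int[mu]_(x in _) _ ^\- x)%E => [p| |] [n| |].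
Qed.

Lemma RintegralZl_measurable (f : T -> R) (r : R) : measurable_fun D f ->
  Rintegral mu D (fun x => r * f x) = r * Rintegral mu D f.
Proof.
move=> mf; have [->|r0] := eqVneq r 0.
  by under eq_Rintegral do rewrite mul0r; rewrite Rintegral_cst // !mul0r.
have [intf|nintf] := pselect (mu.-integrable D (EFin \o f)).
  exact: RintegralZl.
rewrite !Rintegral_nonintegrable ?mulr0 //.
- exact: measurable_funM.
- move=> intrf; apply: nintf.
  have := integrableZl mD (r^-1) intrf.
  by apply: eq_integrable => // x _; rewrite /= -EFinM mulrA mulVf ?mul1r.
Qed.

Lemma Rintegral_eq0_ae (f : T -> R) : mu.-integrable D (EFin \o f) ->
  (forall x, D x -> 0 <= f x) -> Rintegral mu D f = 0 ->
  \forall x \ae mu, D x -> f x = 0.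
Proof.
move=> intf f0 If0.
have Iabs : (\int[mu]_(x in D) `|(EFin \o f) x| = 0)%E.
  transitivity (\int[mu]_(x in D) (EFin \o f) x)%E.
    by apply: eq_integral => x /[!inE] Dx; rewrite /= ger0_norm ?f0.
  by rewrite -(fineK (integrable_fin_num mD intf)) -[fine _]/(Rintegral mu D f) If0.
have := (ae_eq_integral_abs mu mD (measurable_int mu intf)).1 Iabs.
by apply: filterS => x f0x Dx; have [] := f0x Dx.
Qed.

End Rintegral_extra.

Section inf_image.
Variable R : realType.

(* [f 0 = 0] is needed for an empty [A], whose [inf] is [0]. *)
Lemma inf_image_ge0 (f g : R -> R) (A : set R) :
  f 0 = 0 ->
  {in Num.nneg &, {homo f : x y / x <= y}} ->
  {in Num.nneg &, {homo g : x y / x <= y}} ->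
  {in Num.nneg, cancel f g} -> {in Num.nneg, cancel g f} ->
  (forall x, A x -> 0 <= x) ->
  inf (f @` A) = f (inf A).
Proof.
move=> f0 homof homog fK gK A0.
have [[x0 Ax0]|A_empty] := pselect (A !=set0); last first.
  rewrite (_ : A = set0) ?image_set0 ?inf0 //.
  by apply/seteqP; split => // x Ax; apply: A_empty; exists x.
have f_ge0 x : 0 <= x -> 0 <= f x.
  by move=> x0'; rewrite -f0 homof ?nnegrE.
have g_ge0 y : 0 <= y -> 0 <= g y.
  by move=> y0; rewrite -(fK 0) ?nnegrE // f0 homog ?nnegrE.
have infA_ge0 : 0 <= inf A by apply: lb_le_inf; [exists x0 | exact: A0].
have fA_lb : lbound (f @` A) 0 by move=> _ [x Ax <-]; exact/f_ge0/A0.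
have fA_ge_inf x : A x -> inf (f @` A) <= f x.
  by move=> Ax; apply: ge_inf; [exists 0 | exists x].
set m := inf (f @` A).
have m_ge0 : 0 <= m by apply: lb_le_inf => //; exists (f x0), x0.
apply/eqP; rewrite eq_le; apply/andP; split.
- have gm_le : g m <= inf A.
    apply: lb_le_inf; first by exists x0.
    move=> x Ax; rewrite -(fK x) ?nnegrE ?A0 //.
    by apply: homog; rewrite ?nnegrE ?m_ge0 ?f_ge0 ?A0 ?fA_ge_inf.
  by rewrite -[m]gK ?nnegrE // homof ?nnegrE ?g_ge0.
- apply: lb_le_inf; first by exists (f x0), x0.
  move=> _ [x Ax <-]; apply: homof; rewrite ?nnegrE ?infA_ge0 ?A0 //.
  by apply: ge_inf => //; exists 0 => y /A0.
Qed.

Lemma inf_image_scaled_powR (C p : R) (A : set R) : 0 < C -> 0 < p ->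
  (forall x, A x -> 0 <= x) ->
  inf ((fun x => C * x `^ p) @` A) = C * inf A `^ p.
Proof.
move=> C0 p0 A0.
have powR_homo (q : R) : 0 <= q ->
    {in Num.nneg &, {homo (fun x : R => x `^ q) : x y / x <= y}}.
  by move=> q0 x y /[!nnegrE] x0 y0 xy; exact: ge0_ler_powR.
apply: (@inf_image_ge0 _ (fun y => (y / C) `^ p^-1)) => //.
- by rewrite powR0 ?mulr0 ?gt_eqF.
- by move=> x y x0 y0 xy; rewrite ler_pM2l // powR_homo // ltW.
- move=> x y /[!nnegrE] x0 y0 xy; apply: powR_homo;
    by rewrite ?nnegrE ?invr_ge0 ?divr_ge0 ?ler_pM2r ?invr_gt0 ?(ltW p0) ?(ltW C0).
- move=> x /[!nnegrE] x0 /=.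
  by rewrite mulrC mulKf ?gt_eqF // -powRrM mulfV ?gt_eqF // powRr1.
- move=> y /[!nnegrE] y0 /=.
  rewrite -powRrM mulVf ?gt_eqF // powRr1 ?divr_ge0 ?(ltW C0) //.
  by rewrite mulrC divfK ?gt_eqF.
Qed.

End inf_image.

Lemma exprn_powRV (R : realType) (x : R) n : 0 <= x -> (0 < n)%N -> (x `^ n%:R^-1) ^+ n = x.
Proof.
move=> x0 n0; rewrite -powR_mulrn ?powR_ge0 // -powRrM mulVf ?powRr1 //.
by rewrite pnatr_eq0 -lt0n.
Qed.

Lemma powR_exprnM (R : realType) (t : R) (m n k : nat) : 0 <= t -> (0 < k)%N ->
  (t ^+ (m * k)) `^ (n%:R / k%:R) = t ^+ (m * n).
Proof.
move=> t0 k0; rewrite -!powR_mulrn // -powRrM; congr (_ `^ _).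
by rewrite !natrM mulrA mulrAC mulfK // pnatr_eq0 -lt0n.
Qed.

Lemma is_derive_ray_powers (R : realType) (m n : nat) (A B : R) :
  is_derive (0 : R) 1 (fun t : R => (1 + t) ^+ m * A - (1 + t) ^+ n * B)
    (m%:R * A - n%:R * B).
Proof.
(* Written with [cst] and [id], the [is_derive] instances compute the derivative. *)
have -> : (fun t : R => (1 + t) ^+ m * A - (1 + t) ^+ n * B) =
    (cst 1 + id) ^+ m * cst A - (cst 1 + id) ^+ n * cst B.
  by apply/funext => t; rewrite !fctE.
apply: is_derive_eq.
by rewrite !fctE addr0 add0r !expr1n !scaler0 !add0r /GRing.scale /=; ring.
Qed.

Section H1_scaling.
Variable R : realType.
Implicit Types (u du phi : R -> R) (s : R).

Lemma measurable_fun_derivable u : (forall x, derivable u x 1) ->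
  measurable_fun setT u.
Proof.
move=> du; apply: continuous_measurable_fun => x.
exact/differentiable_continuous/derivable1_diffP.
Qed.

Lemma measurable_test_fun phi : test_fun phi ->
  measurable_fun setT phi /\ measurable_fun setT (derive1 phi).
Proof.
move=> [dphi _]; split; apply: measurable_fun_derivable => x.
  exact: (dphi 0%N x).
by have := dphi 1%N x; rewrite derive1n1.
Qed.

Lemma L2_scale u s : L2 u -> L2 (fun x => s * u x).
Proof.
move=> [mfu intu]; split; first exact: measurable_funM.
have := integrableZl measurableT (s ^+ 2) intu.
by apply: eq_integrable => // x _; rewrite /= -EFinM exprMn.
Qed.

Lemma H1_measurable u du : H1 u du ->
  measurable_fun setT u /\ measurable_fun setT du.
Proof. by move=> [[mfu _] [[mfdu _] _]]. Qed.

Lemma H1_scale u du s : H1 u du -> H1 (fun x => s * u x) (fun x => s * du x).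
Proof.
move=> /[dup] /H1_measurable[mfu mfdu] [Lu [Ldu wd]].
split; [exact: L2_scale | split; first exact: L2_scale].
move=> phi /[dup] /measurable_test_fun[mphi mdphi] /wd.
rewrite /Defs.Rint => wd_phi.
under eq_Rintegral do rewrite -mulrA.
under [in RHS]eq_Rintegral do rewrite -mulrA.
rewrite !RintegralZl_measurable ?wd_phi ?mulrN //; exact: measurable_funM.
Qed.

End H1_scaling.

Section Nehari_manifold.
Variables (R : realType) (k : nat) (a b c d : R).
Local Notation mu := (@lebesgue_measure R).
Implicit Types (u du v dv : R -> R) (s : R).

Lemma Hnl_scale s x y :
  Hnl k a b c d (s * x) (s * y) = s ^+ (2 * k.+1) * Hnl k a b c d x y.
Proof.
have sE : s ^+ (2 * k.+1) = s ^+ k * s ^+ k * s * s.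
  by rewrite -exprD -!exprSr mul2n -addnn addSn addnS.
by rewrite /Hnl !exprMn sE !exprS; ring.
Qed.

Lemma Hnl00 : Hnl k a b c d 0 0 = 0.
Proof. by have := Hnl_scale 0 0 0; rewrite mul0r expr0n /= mul0r. Qed.

Lemma measurable_Hnl u v : measurable_fun setT u -> measurable_fun setT v ->
  measurable_fun setT (fun x => Hnl k a b c d (u x) (v x)).
Proof.
move=> mfu mfv; rewrite /Hnl.
apply: measurable_funD; [apply: measurable_funD; [apply: measurable_funD|]|];
  apply: measurable_funM; try exact: measurable_cst.
- by apply: measurable_funD; exact: measurable_funX.
- by apply: measurable_funX; exact: measurable_funM.
- by apply: measurable_funM; exact: measurable_funX.
- by apply: measurable_funM; exact: measurable_funX.
Qed.

Lemma Sfun_scale u du v dv s : H1 u du -> H1 v dv ->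
  Sfun (fun x => s * u x) (fun x => s * du x) (fun x => s * v x) (fun x => s * dv x)
  = s ^+ 2 * Sfun u du v dv.
Proof.
move=> /H1_measurable[mfu mfdu] /H1_measurable[mfv mfdv]; rewrite /Sfun /Defs.Rint.
under eq_Rintegral do rewrite !exprMn -!mulrDr.
rewrite RintegralZl_measurable //.
by repeat first [ apply: measurable_funD | apply: measurable_funX | assumption ].
Qed.

Lemma Ptil_scale u v s : measurable_fun setT u -> measurable_fun setT v ->
  Ptil k a b c d (fun x => s * u x) (fun x => s * v x)
  = s ^+ (2 * k.+1) * Ptil k a b c d u v.
Proof.
move=> mfu mfv; rewrite /Ptil /Defs.Rint.
under eq_Rintegral do rewrite Hnl_scale.
by rewrite RintegralZl_measurable //; [rewrite mulrCA | exact: measurable_Hnl].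
Qed.

Lemma IfunE u du v dv :
  Ifun k a b c d u du v dv = Sfun u du v dv / 2 - Ptil k a b c d u v / (2 * k.+1)%:R.
Proof. by rewrite /Ifun /Ptil [X in _ = _ - X]mulrC mulKf ?pnatr_eq0. Qed.

Lemma IrayE u du v dv : H1 u du -> H1 v dv ->
  Iray k a b c d u du v dv = fun t => (1 + t) ^+ 2 * (Sfun u du v dv / 2)
    - (1 + t) ^+ (2 * k.+1) * (Ptil k a b c d u v / (2 * k.+1)%:R).
Proof.
move=> hu hv; apply/funext => t; rewrite /Iray.
have ray f : (fun x => f x + t * f x) = (fun x => (1 + t) * f x).
  by apply/funext => x; rewrite mulrDl mul1r.
have [mfu _] := H1_measurable hu; have [mfv _] := H1_measurable hv.
by rewrite !ray IfunE Sfun_scale // Ptil_scale // !mulrA.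
Qed.

Lemma is_derive_Iray u du v dv : H1 u du -> H1 v dv ->
  is_derive (0 : R) 1 (Iray k a b c d u du v dv) (Sfun u du v dv - Ptil k a b c d u v).
Proof.
move=> hu hv; rewrite IrayE //; apply: is_derive_eq (is_derive_ray_powers _ _ _ _) _.
by rewrite mulrC divfK ?pnatr_eq0 // [X in _ - X]mulrC divfK ?pnatr_eq0.
Qed.

Lemma NehariP u du v dv : Nehari k a b c d u du v dv <->
  [/\ H1 u du, H1 v dv, ~ (\forall x \ae mu, u x = 0 /\ v x = 0)
    & Sfun u du v dv = Ptil k a b c d u v].
Proof.
split=> [[hu [hv [nz [_ I'0]]]]|[hu hv nz SP]];
  have Iray' := is_derive_Iray hu hv.
- by split=> //; apply/eqP; rewrite -subr_eq0 -I'0 derive1E derive_val.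
- by do 3!split=> //; rewrite derive1E derive_val SP subrr.
Qed.

Lemma Ifun_Nehari u du v dv : Nehari k a b c d u du v dv ->
  Ifun k a b c d u du v dv = k%:R / (2 * k.+1)%:R * Sfun u du v dv.
Proof.
move=> /NehariP[_ _ _ SP]; rewrite IfunE -SP natrM -addn1 natrD.
by field; rewrite addrC natr1 pnatr_eq0.
Qed.

Lemma Sfun_ge0 u du v dv : 0 <= Sfun u du v dv.
Proof. by apply: Rintegral_ge0 => x _; rewrite !addr_ge0 ?sqr_ge0. Qed.

Lemma Sfun_eq0 u du v dv : H1 u du -> H1 v dv -> Sfun u du v dv = 0 ->
  \forall x \ae mu, u x = 0 /\ v x = 0.
Proof.
move=> [[_ iu] [[_ idu] _]] [[_ iv] [[_ idv] _]] S0.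
pose g x := du x ^+ 2 + dv x ^+ 2 + u x ^+ 2 + v x ^+ 2.
have ig : mu.-integrable setT (EFin \o g).
  apply: eq_integrable (integrableD measurableT (integrableD measurableT
    (integrableD measurableT idu idv) iu) iv) => // x _.
have g_ge0 x : setT x -> 0 <= g x by rewrite /g !addr_ge0 ?sqr_ge0.
have := Rintegral_eq0_ae measurableT ig g_ge0 S0.
apply: filterS => x /(_ I) /eqP.
rewrite !paddr_eq0 ?addr_ge0 ?sqr_ge0 // !sqrf_eq0.
by move=> /andP[/andP[_ /eqP->] /eqP->].
Qed.

Lemma Ptil_ae0 u v : measurable_fun setT u -> measurable_fun setT v ->
  (\forall x \ae mu, u x = 0 /\ v x = 0) -> Ptil k a b c d u v = 0.
Proof.
move=> mfu mfv uv0; rewrite /Ptil /Defs.Rint /Rintegral.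
rewrite (ae_eq_integral (cst 0%E)) ?integral0 ?mulr0 //.
- exact: (proj2 (measurable_EFinP _ _) (measurable_Hnl mfu mfv)).
- have ae_filter := ae_filter_ringOfSetsType mu.
  by move: uv0; apply: filterS => x [-> ->] _; rewrite /= Hnl00.
Qed.

Lemma Sfun_gt0 u du v dv : H1 u du -> H1 v dv ->
  ~ (\forall x \ae mu, u x = 0 /\ v x = 0) -> 0 < Sfun u du v dv.
Proof.
move=> hu hv nz; rewrite lt_def Sfun_ge0 andbT.
by apply/eqP => /(Sfun_eq0 hu hv).
Qed.

Lemma constraint_of_Nehari u du v dv : (0 < k)%N -> Nehari k a b c d u du v dv ->
  exists u' du' v' dv', [/\ H1 u' du', H1 v' dv', Ptil k a b c d u' v' = 1 &
    Ifun k a b c d u du v dv =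
      k%:R / (2 * k.+1)%:R * Sfun u' du' v' dv' `^ (k.+1%:R / k%:R)].
Proof.
move=> k0 /[dup] /Ifun_Nehari-> /NehariP[hu hv nz SP].
have S0 := Sfun_gt0 hu hv nz; set S := Sfun u du v dv in S0 SP *.
pose r := S `^ (2 * k.+1)%:R^-1.
have r0 : 0 < r by exact: powR_gt0.
have rS : r ^+ (2 * k.+1) = S by apply: exprn_powRV; rewrite ?ltW.
have [mfu _] := H1_measurable hu; have [mfv _] := H1_measurable hv.
exists (fun x => r^-1 * u x), (fun x => r^-1 * du x),
  (fun x => r^-1 * v x), (fun x => r^-1 * dv x).
split; [exact: H1_scale | exact: H1_scale | |].
- by rewrite Ptil_scale // -SP exprVn rS mulVf ?gt_eqF.
- rewrite Sfun_scale // -/S.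
  have -> : r^-1 ^+ 2 * S = r ^+ (2 * k).
    by rewrite -rS mulnS exprD exprVn mulKf // expf_neq0 ?gt_eqF.
  by rewrite powR_exprnM ?ltW // rS.
Qed.

Lemma Nehari_of_constraint u du v dv : (0 < k)%N ->
  H1 u du -> H1 v dv -> Ptil k a b c d u v = 1 ->
  exists u' du' v' dv', Nehari k a b c d u' du' v' dv' /\
    Ifun k a b c d u' du' v' dv' =
      k%:R / (2 * k.+1)%:R * Sfun u du v dv `^ (k.+1%:R / k%:R).
Proof.
move=> k0 hu hv P1.
have [mfu _] := H1_measurable hu; have [mfv _] := H1_measurable hv.
have nz : ~ (\forall x \ae mu, u x = 0 /\ v x = 0).
  by move=> /(Ptil_ae0 mfu mfv); rewrite P1 => /eqP; rewrite oner_eq0.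
have S0 := Sfun_gt0 hu hv nz; set S := Sfun u du v dv in S0 *.
pose t := S `^ (2 * k)%:R^-1.
have t0 : 0 < t by exact: powR_gt0.
have tS : t ^+ (2 * k) = S by apply: exprn_powRV; rewrite ?ltW ?muln_gt0.
have St : Sfun (fun x => t * u x) (fun x => t * du x)
    (fun x => t * v x) (fun x => t * dv x) = t ^+ (2 * k.+1).
  by rewrite Sfun_scale // -/S -tS -exprD -mulnS.
have Pt : Ptil k a b c d (fun x => t * u x) (fun x => t * v x) = t ^+ (2 * k.+1).
  by rewrite Ptil_scale // P1 mulr1.
have hN : Nehari k a b c d (fun x => t * u x) (fun x => t * du x)
    (fun x => t * v x) (fun x => t * dv x).
  apply/NehariP; split; [exact: H1_scale | exact: H1_scale | | by rewrite St Pt].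
  have [mftu _] := H1_measurable (H1_scale t hu).
  have [mftv _] := H1_measurable (H1_scale t hv).
  move=> /(Ptil_ae0 mftu mftv) /eqP; rewrite Pt.
  by rewrite expf_eq0 gt_eqF ?andbF.
exists (fun x => t * u x), (fun x => t * du x),
  (fun x => t * v x), (fun x => t * dv x).
by split=> //; rewrite Ifun_Nehari // St -tS powR_exprnM ?ltW.
Qed.

End Nehari_manifold.

Theorem lemma5p1 (R : realType) (k : nat) (a b c d : R) :
  (1 <= k)%N -> 0 <= a -> 0 <= b -> 0 <= c -> 0 <= d ->
  lambda1 k a b c d = (2 * k.+1)%:R / k%:R * omegaN k a b c d.
Proof.
move=> k0 _ _ _ _.
have Nehari_values :
    [set s | exists u du v dv, Nehari k a b c d u du v dv /\
       s = Ifun k a b c d u du v dv] =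
    (fun x => k%:R / (2 * k.+1)%:R * x `^ (k.+1%:R / k%:R)) @`
    [set s | exists u du v dv, H1 u du /\ H1 v dv /\
       Ptil k a b c d u v = 1 /\ s = Sfun u du v dv].
  apply/seteqP; split.
  - move=> _ [u [du [v [dv [/(constraint_of_Nehari k0) hN ->]]]]].
    have [u' [du' [v' [dv' [hu' hv' P1 ->]]]]] := hN.
    by exists (Sfun u' du' v' dv') => //; exists u', du', v', dv'.
  - move=> _ [_ [u [du [v [dv [hu [hv [P1 ->]]]]]]] <-].
    have [u' [du' [v' [dv' [hN IE]]]]] := Nehari_of_constraint k0 hu hv P1.
    by exists u', du', v', dv'; rewrite IE.
have k_neq0 : k%:R != 0 :> R by rewrite pnatr_eq0 -lt0n.
rewrite /omegaN Nehari_values inf_image_scaled_powR.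
- by rewrite /lambda1 /S1 mulrA; field; rewrite addrC natr1 pnatr_eq0 k_neq0.
- by rewrite divr_gt0 ?ltr0n ?muln_gt0.
- by rewrite divr_gt0 ?ltr0n.
- by move=> _ [u [du [v [dv [_ [_ [_ ->]]]]]]]; exact: Sfun_ge0.
Qed.
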